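(* For every $z\in\mathbb{D}^*$, $\Gamma_z=\{a-b: a,b\in\Lambda_z\}$.
   Context: For $z\in\mathbb{D}^*=\{0<|z|<1\}$, $f(x)=zx$, $g(x)=z(x-1)+1$, and $\Lambda_z$ is the unique nonempty compact subset of $\mathbb{C}$ with $\Lambda_z=f(\Lambda_z)\cup g(\Lambda_z)$. $\Gamma_z$ is the unique nonempty compact subset of $\mathbb{C}$ that equals the union of its images under the three maps $x\mapsto z(x+1)-1$, $x\mapsto zx$, $x\mapsto z(x-1)+1$. *)

(* The complex plane is modelled as R * R
   (R : realType) with the product topology, which is the usual topology
   of C; complex arithmetic on pairs is defined explicitly below. *)
From mathcomp Require Import all_boot all_algebra.
From mathcomp Require Import all_classical all_reals all_analysis.
Import numFieldNormedType.Exports.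
Set Implicit Arguments. Unset Strict Implicit. Unset Printing Implicit Defensive.
Local Open Scope ring_scope.
Local Open Scope classical_set_scope.

Section ComplexPairs.
Variable R : realType.
Definition cplx := (R * R)%type.
Definition cadd (x y : cplx) : cplx := (x.1 + y.1, x.2 + y.2).
Definition csub (x y : cplx) : cplx := (x.1 - y.1, x.2 - y.2).
Definition cmul (x y : cplx) : cplx := (x.1 * y.1 - x.2 * y.2, x.1 * y.2 + x.2 * y.1).
Definition cone : cplx := (1, 0).
Definition czero : cplx := (0, 0).
Definition in_punctured_disk (z : cplx) : Prop :=
  0 < z.1 ^+ 2 + z.2 ^+ 2 < 1.

Definition fmap (z x : cplx) : cplx := cmul z x.
Definition gmap (z x : cplx) : cplx := cadd (cmul z (csub x cone)) cone.
Definition h1 (z x : cplx) : cplx := csub (cmul z (cadd x cone)) cone.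
Definition h2 (z x : cplx) : cplx := cmul z x.
Definition h3 (z x : cplx) : cplx := cadd (cmul z (csub x cone)) cone.

Definition is_Lambda (z : cplx) (K : set cplx) : Prop :=
  K !=set0 /\ compact K /\ K = fmap z @` K `|` gmap z @` K.
Definition is_Gamma (z : cplx) (K : set cplx) : Prop :=
  K !=set0 /\ compact K /\ K = h1 z @` K `|` h2 z @` K `|` h3 z @` K.
End ComplexPairs.

(* Both Gamma_z and Lambda_z - Lambda_z are nonempty compact sets, and each is
   invariant under the three maps x |-> z(x+1) - 1, z x, z(x-1) + 1, because
   f a - g b = z(a-b+1) - 1, f a - f b = g a - g b = z(a-b), g a - f b = z(a-b-1) + 1.
   Moreover each set is covered by its own images under these maps.  The maps
   contract squared distances by the factor |z|^2 < 1, so a bounded set covered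
   by its images lies in every closed nonempty invariant set: a point is the
   image of some point under an n-fold composition, hence within |z|^(2n) times
   a fixed bound of the closed set.  Applying this in both directions gives the
   equality. *)
From Pilot Require Import Defs.
From mathcomp Require Import all_boot all_order all_algebra.
From mathcomp Require Import all_classical all_reals all_analysis.
From mathcomp Require Import ring lra.
Import numFieldNormedType.Exports.
Import Order.TTheory GRing.Theory Num.Theory.
Set Implicit Arguments. Unset Strict Implicit.
Local Open Scope ring_scope.
Local Open Scope classical_set_scope.

Section SquaredDistance.
Variable R : realType.
Implicit Types (x w : cplx R) (K : set (cplx R)).

Definition N2 (v : cplx R) : R := v.1 ^+ 2 + v.2 ^+ 2.

Lemma N2_ge0 v : 0 <= N2 v.
Proof. rewrite /N2; nra. Qed.

Lemma closure_N2_approx K x :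
  (forall e : R, 0 < e -> exists2 w, K w & N2 (csub x w) < e) -> closure K x.
Proof.
move=> approx B /nbhs_ballP [e /= e0 Be].
have [w Kw xw] := approx (e ^+ 2) (exprn_gt0 2 e0).
exists w; split => //; apply: Be.
have sq_lt a b : a ^+ 2 + b ^+ 2 < e ^+ 2 -> `|a| < e.
  by move=> ab; apply/ltr_normlP; split; nra.
rewrite -ball_normE /ball_ /= prod_normE /= gt_max.
rewrite /N2 /csub /= in xw.
by rewrite (sq_lt _ _ xw) (sq_lt (x.2 - w.2) (x.1 - w.1)) // addrC.
Qed.

Lemma compact_N2_bounded K w0 : compact K ->
  exists B, forall x, K x -> N2 (csub x w0) <= B.
Proof.
move=> /compact_bounded [M [Mreal HM]].
have KM := HM (`|M| + 1) (le_lt_trans (real_ler_norm Mreal) (ltr_pwDr ltr01 (lexx _))).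
set c := `|M| + 1 + `|w0|.
exists (c ^+ 2 + c ^+ 2) => x Kx.
have : `|x - w0| <= c by apply: le_trans (ler_normB _ _) _; rewrite lerD2r; exact: KM.
rewrite prod_normE ge_max => /andP[/ler_normlP[? ?] /ler_normlP[? ?]].
rewrite /N2 /csub /=; nra.
Qed.

Lemma compact_diff_set K : compact K -> compact [set csub a b | a in K & b in K].
Proof.
move=> cK; rewrite image2E.
apply: continuous_compact; last exact: compact_setX.
apply: continuous_subspaceT => p.
have -> : uncurry (@csub R) = (fun x : cplx R * cplx R => x.1 - x.2).
  by apply: funext => -[a b].
exact: sub_continuous.
Qed.

End SquaredDistance.

Lemma expr_lt_eventually (R : realType) (q c : R) :
  0 <= q < 1 -> 0 < c -> exists n : nat, q ^+ n < c.
Proof.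
move=> /andP[q0 q1] c0.
have /cvg_expr qn0 : `|q| < 1 by rewrite ger0_norm.
have [N _ qN] := @cvgr_lt R _ _ _ _ _ qn0 _ c0.
by exists N; exact: (qN N (leqnn N)).
Qed.

Section Attractor.
Variables (R : realType) (H : set (cplx R -> cplx R)) (q : R).
Hypothesis q_ge0 : 0 <= q.
Hypothesis q_lt1 : q < 1.
Hypothesis contractH :
  forall h, H h -> forall x y, N2 (csub (h x) (h y)) <= q * N2 (csub x y).

Variables (K1 K2 : set (cplx R)).
Hypothesis K1_cover : K1 `<=` \bigcup_(h in H) h @` K1.
Hypothesis K2_invariant : forall h, H h -> h @` K2 `<=` K2.

Lemma covered_near_invariant w0 B : K2 w0 ->
  (forall x, K1 x -> N2 (csub x w0) <= B) ->
  forall n x, K1 x -> exists2 w, K2 w & N2 (csub x w) <= q ^+ n * B.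
Proof.
move=> K2w0 K1B; elim=> [|n IHn] x K1x.
  by exists w0; rewrite // expr0 mul1r; exact: K1B.
have [h Hh [y K1y <-]] := K1_cover K1x.
have [w K2w yw] := IHn y K1y.
exists (h w); first by apply: (K2_invariant Hh); exists w.
apply: le_trans (contractH Hh y w) _.
by rewrite exprS -mulrA ler_wpM2l.
Qed.

Lemma covered_sub_invariant :
  compact K1 -> closed K2 -> K2 !=set0 -> K1 `<=` K2.
Proof.
move=> cK1 cK2 [w0 K2w0] x K1x.
have [B K1B] := compact_N2_bounded w0 cK1.
have B0 : 0 <= B by apply: le_trans (K1B x K1x); exact: N2_ge0.
apply: cK2; apply: closure_N2_approx => e e0.
have [n qn] : exists n : nat, q ^+ n < e / (B + 1).
  by apply: expr_lt_eventually; rewrite ?q_ge0 ?q_lt1 // divr_gt0 // ltr_wpDl.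
have [w K2w xw] := covered_near_invariant K2w0 K1B n K1x.
exists w => //; apply: le_lt_trans xw _.
rewrite ltr_pdivlMr ?ltr_wpDl // in qn.
have := exprn_ge0 n q_ge0; nra.
Qed.

End Attractor.

Section SelfSimilarSets.
Variables (R : realType) (z : cplx R).
Implicit Types (a b : cplx R) (K : set (cplx R)).

Definition hmaps : set (cplx R -> cplx R) :=
  [set h | h = h1 z \/ h = h2 z \/ h = h3 z].

Lemma N2_hmaps h : hmaps h ->
  forall x y, N2 (csub (h x) (h y)) = N2 z * N2 (csub x y).
Proof.
by move=> [->|[->|->]] x y; rewrite /N2 /h1 /h2 /h3 /csub /Defs.cadd /cmul /cone /=; ring.
Qed.

Lemma h1_csub a b : h1 z (csub a b) = csub (Defs.fmap z a) (gmap z b).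
Proof. by rewrite /h1 /Defs.fmap /gmap /csub /Defs.cadd /cmul /cone /=; congr (_, _); ring. Qed.

Lemma h2_csub_fmap a b : h2 z (csub a b) = csub (Defs.fmap z a) (Defs.fmap z b).
Proof. by rewrite /h2 /Defs.fmap /csub /cmul /=; congr (_, _); ring. Qed.

Lemma h2_csub_gmap a b : h2 z (csub a b) = csub (gmap z a) (gmap z b).
Proof. by rewrite /h2 /gmap /csub /Defs.cadd /cmul /cone /=; congr (_, _); ring. Qed.

Lemma h3_csub a b : h3 z (csub a b) = csub (gmap z a) (Defs.fmap z b).
Proof. by rewrite /h3 /Defs.fmap /gmap /csub /Defs.cadd /cmul /cone /=; congr (_, _); ring. Qed.

Lemma hmaps_cover K :
  K = h1 z @` K `|` h2 z @` K `|` h3 z @` K -> K `<=` \bigcup_(h in hmaps) h @` K.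
Proof.
move=> eK x; rewrite {1}eK => -[[Kx|Kx]|Kx].
- by exists (h1 z) => //; left.
- by exists (h2 z) => //; right; left.
- by exists (h3 z) => //; right; right.
Qed.

Lemma hmaps_invariant K :
  K = h1 z @` K `|` h2 z @` K `|` h3 z @` K -> forall h, hmaps h -> h @` K `<=` K.
Proof.
by move=> eK h [->|[->|->]] _ [w Kw <-]; rewrite eK; [left; left|left; right|right];
  exists w.
Qed.

Section DiffSet.
Variable L : set (cplx R).
Hypothesis eL : L = Defs.fmap z @` L `|` gmap z @` L.
Let D := [set csub a b | a in L & b in L].

Let L_fmap a : L a -> L (Defs.fmap z a).
Proof. by move=> La; rewrite eL; left; exists a. Qed.

Let L_gmap a : L a -> L (gmap z a).
Proof. by move=> La; rewrite eL; right; exists a. Qed.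

Lemma diff_set_invariant h : hmaps h -> h @` D `<=` D.
Proof.
move=> [->|[->|->]] _ [_ [a La [b Lb <-]] <-].
- by rewrite h1_csub; exists (Defs.fmap z a); last exists (gmap z b); auto.
- by rewrite h2_csub_fmap; exists (Defs.fmap z a); last exists (Defs.fmap z b); auto.
- by rewrite h3_csub; exists (gmap z a); last exists (Defs.fmap z b); auto.
Qed.

Lemma diff_set_cover : D `<=` \bigcup_(h in hmaps) h @` D.
Proof.
have inD a b : L a -> L b -> D (csub a b) by move=> La Lb; exists a; last exists b.
move=> _ [a La [b Lb <-]]; rewrite eL in La Lb.
case: La Lb => -[a' La' <-] [[b' Lb' <-]|[b' Lb' <-]].
- by exists (h2 z); [right; left | exists (csub a' b'); rewrite ?h2_csub_fmap; auto].
- by exists (h1 z); [left | exists (csub a' b'); rewrite ?h1_csub; auto].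
- by exists (h3 z); [right; right | exists (csub a' b'); rewrite ?h3_csub; auto].
- by exists (h2 z); [right; left | exists (csub a' b'); rewrite ?h2_csub_gmap; auto].
Qed.

End DiffSet.

End SelfSimilarSets.

Theorem lemma6p1p1 (R : realType) (z : cplx R) (Lambda Gamma : set (cplx R)) :
  in_punctured_disk z -> is_Lambda z Lambda -> is_Gamma z Gamma ->
  Gamma = [set csub a b | a in Lambda & b in Lambda].
Proof.
move=> /andP[/ltW z_ge0 z_lt1] [[l0 Ll0] [cL eL]] [G0 [cG eG]].
have cD := compact_diff_set cL.
have contract h : hmaps z h -> forall x y,
    N2 (csub (h x) (h y)) <= N2 z * N2 (csub x y).
  by move=> Hh x y; rewrite (N2_hmaps Hh).
apply/seteqP; split.
- apply: (covered_sub_invariant z_ge0 z_lt1 contract (hmaps_cover eG)).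
  + exact: diff_set_invariant.
  + exact: cG.
  + exact: compact_closed.
  + by exists (csub l0 l0); exists l0 => //; exists l0.
- apply: (covered_sub_invariant z_ge0 z_lt1 contract (diff_set_cover eL)).
  + exact: hmaps_invariant.
  + exact: cD.
  + exact: compact_closed.
  + exact: G0.
Qed.
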